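(* Let $\alpha$ be a nonzero real number and let $\gamma(t)=\Psi(u(t),v(t))$, $t\in[a,b]$, be a regular curve in $\mathbb H^2$ not passing through $N$. Then $\gamma$ is an $\alpha$-stationary curve if and only if $$\kappa=-\alpha\,\frac{v'\sinh u}{u\,|\gamma'|_\epsilon}.$$
   Context: Let $\langle x,y\rangle_\epsilon=x_1y_1+x_2y_2-x_3y_3$ be the Lorentzian inner product on $\mathbb R^3$ and $|x|_\epsilon=\sqrt{|\langle x,x\rangle_\epsilon|}$. The hyperbolic plane is $\mathbb H^2=\{(x,y,z):x^2+y^2-z^2=-1,\ z>0\}$ with the induced metric. It is parametrized by $\Psi(u,v)=(\sinh u\cos v,\sinh u\sin v,\cosh u)$. Let $N=(0,0,1)$. The hyperbolic distance from $\Psi(u,v)$ ($u\ge 0$) to $N$ is $u$. For a regular curve $\gamma(t)=\Psi(u(t),v(t))$ with $u>0$, we have $|\gamma'|_\epsilon=\sqrt{u'^2+\sinh^2(u)v'^2}$. Its unit normal is $$\mathbf n=\frac{1}{|\gamma'|_\epsilon}\big(u'\sin v+\sinh u\cosh u\,v'\cos v,\ \sinh u\cosh u\,v'\sin v-u'\cos v,\ \sinh^2(u)\,v'\big).$$ Its curvature is $$\kappa=\frac{\langle\gamma'',\mathbf n\rangle_\epsilon}{|\gamma'|_\epsilon^2}=\frac{v'\cosh u\,(2u'^2+v'^2\sinh^2u)+\sinh u\,(u'v''-u''v')}{|\gamma'|_\epsilon^3}.$$ For $\alpha\in\mathbb R$, the energy of $\gamma$ is $$E_\alpha[\gamma]=\int_\gamma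 \mathsf d^\alpha\,ds=\int_a^b u^\alpha\sqrt{u'^2+\sinh^2(u)v'^2}\,dt,$$ where $\mathsf d$ is the hyperbolic distance to $N$. A curve is called $\alpha$-stationary if it is a critical point of $E_\alpha$, i.e. $(u,v)$ satisfies the Euler–Lagrange equations of this functional. Throughout the paper, $\alpha\neq0$ and curves are assumed not to pass through $N$. *)

From Stdlib Require Import Reals.
From Coquelicot Require Import Coquelicot.
Open Scope R_scope.

(* A curve gamma(t) = Psi(u t, v t) in H^2 given by its coordinate functions u, v. *)

Definition der1 (f : R -> R) : R -> R := Derive f.
Definition der2 (f : R -> R) : R -> R := Derive (Derive f).

Definition speed (u v : R -> R) (t : R) : R :=
  sqrt (der1 u t ^ 2 + sinh (u t) ^ 2 * der1 v t ^ 2).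

(* curvature kappa, by the explicit formula of the paper *)
Definition curvature (u v : R -> R) (t : R) : R :=
  (der1 v t * cosh (u t) * (2 * der1 u t ^ 2 + der1 v t ^ 2 * sinh (u t) ^ 2)
   + sinh (u t) * (der1 u t * der2 v t - der2 u t * der1 v t)) / speed u v t ^ 3.

(* Lagrangian L(u,v,u',v') = u^alpha sqrt(u'^2 + sinh^2(u) v'^2) (u > 0).
   Partial derivatives along the curve: *)
Definition dL_du' (alpha : R) (u v : R -> R) (t : R) : R :=
  Rpower (u t) alpha * der1 u t / speed u v t.
Definition dL_dv' (alpha : R) (u v : R -> R) (t : R) : R :=
  Rpower (u t) alpha * sinh (u t) ^ 2 * der1 v t / speed u v t.
Definition dL_du (alpha : R) (u v : R -> R) (t : R) : R :=
  alpha * Rpower (u t) (alpha - 1) * speed u v t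
  + Rpower (u t) alpha * sinh (u t) * cosh (u t) * der1 v t ^ 2 / speed u v t.
(* dL/dv = 0 *)

(* alpha-stationary: the Euler-Lagrange equations of E_alpha hold on [a,b]:
   d/dt (dL/du') = dL/du  and  d/dt (dL/dv') = dL/dv = 0. *)
Definition alpha_stationary (alpha : R) (u v : R -> R) (a b : R) : Prop :=
  forall t, a <= t <= b ->
    is_derive (dL_du' alpha u v) t (dL_du alpha u v t) /\
    is_derive (dL_dv' alpha u v) t 0.

(* Write p = u^alpha, s = |gamma'|, and K for the difference between the two
   sides of the curvature equation.  A direct computation gives the residuals
   of the two Euler-Lagrange equations as -p sinh(u) v' K and p sinh(u) u' K.
   Since p sinh(u) > 0 and (u', sinh(u) v') <> (0, 0) on a regular curve, both
   residuals vanish exactly when K = 0. *)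
From Stdlib Require Import Reals Lra.
From Coquelicot Require Import Coquelicot.
Open Scope R_scope.

Lemma is_derive_Rpower_l (f : R -> R) (c x l : R) :
  0 < f x -> is_derive f x l ->
  is_derive (fun y => Rpower (f y) c) x (c * Rpower (f x) (c - 1) * l).
Proof.
  intros f_pos df.
  eapply is_derive_ext; [intros y; reflexivity|].
  replace (c * Rpower (f x) (c - 1) * l) with (l * (c * Rpower (f x) (c - 1)))
    by ring.
  apply (is_derive_comp (fun y => Rpower y c)); [|exact df].
  now apply is_derive_Reals, derivable_pt_lim_power.
Qed.

Lemma is_derive_sinh_l (f : R -> R) (x l : R) :
  is_derive f x l -> is_derive (fun y => sinh (f y)) x (cosh (f x) * l).
Proof.
  intros df; rewrite Rmult_comm.
  apply (is_derive_comp sinh); [|exact df].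
  apply is_derive_Reals, derivable_pt_lim_sinh.
Qed.

Lemma Rpower_sub_1 (x c : R) : 0 < x -> Rpower x (c - 1) = Rpower x c / x.
Proof.
  intros x_pos; unfold Rminus.
  now rewrite Rpower_plus, Rpower_Ropp, Rpower_1.
Qed.

Lemma sinh_pos (x : R) : 0 < x -> 0 < sinh x.
Proof. intros x_pos; rewrite <- sinh_0; apply sinh_lt, x_pos. Qed.

Lemma speed_sqr (u v : R -> R) (t : R) :
  speed u v t ^ 2 = der1 u t ^ 2 + sinh (u t) ^ 2 * der1 v t ^ 2.
Proof.
  unfold speed; rewrite pow2_sqrt; [reflexivity|].
  apply Rplus_le_le_0_compat; [|apply Rmult_le_pos]; apply pow2_ge_0.
Qed.

Ltac simpl_derive_value H :=
  repeat change (mult ?x ?y) with (x * y) in H;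
  repeat change (plus ?x ?y) with (x + y) in H;
  cbn [INR Nat.pred] in H.

Lemma is_derive_eq_l (f : R -> R) (x l l' : R) :
  l = l' -> is_derive f x l -> is_derive f x l'.
Proof. now intros <-. Qed.

Lemma eq0_of_mul_coords_eq0 (x y k : R) :
  0 < x ^ 2 + y ^ 2 -> x * k = 0 -> y * k = 0 -> k = 0.
Proof.
  intros pos xk yk.
  apply (Rmult_eq_reg_r (x ^ 2 + y ^ 2)); [|lra].
  replace (k * (x ^ 2 + y ^ 2)) with (x * (x * k) + y * (y * k)) by ring.
  rewrite xk, yk; ring.
Qed.

Definition curvature_defect (alpha : R) (u v : R -> R) (t : R) : R :=
  curvature u v t - - alpha * (der1 v t * sinh (u t)) / (u t * speed u v t).

Section EulerLagrangeResiduals.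

Variables (alpha : R) (u v : R -> R) (t : R).
Hypotheses (du : ex_derive u t) (ddu : ex_derive (Derive u) t).
Hypothesis (ddv : ex_derive (Derive v) t).
Hypotheses (u_pos : 0 < u t) (speed_pos : 0 < speed u v t).

Let speed_ne0 : speed u v t <> 0 := Rgt_not_eq _ _ speed_pos.

Lemma is_derive_speed :
  is_derive (speed u v) t
    ((der1 u t * der2 u t
      + sinh (u t) * cosh (u t) * der1 u t * der1 v t ^ 2
      + sinh (u t) ^ 2 * der1 v t * der2 v t) / speed u v t).
Proof.
  assert (dsinh2 := is_derive_pow (fun y => sinh (u y)) 2 t _
                      (is_derive_sinh_l u t _ (Derive_correct _ _ du))).
  assert (sqr_pos : 0 < der1 u t ^ 2 + sinh (u t) ^ 2 * der1 v t ^ 2).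
  { rewrite <- (speed_sqr u v t); apply pow_lt, speed_pos. }
  assert (d := is_derive_sqrt _ t _
                 (is_derive_plus _ _ t _ _
                    (is_derive_pow _ 2 t _ (Derive_correct _ _ ddu))
                    (is_derive_mult _ _ t _ _ dsinh2
                       (is_derive_pow _ 2 t _ (Derive_correct _ _ ddv))
                       (fun _ _ => Rmult_comm _ _)))
                 sqr_pos).
  simpl_derive_value d.
  eapply is_derive_eq_l, d.
  unfold speed, der1, der2 in *; field; exact speed_ne0.
Qed.

Ltac field_using_speed_sqr :=
  unfold dL_du, curvature_defect, curvature, der1, der2;
  rewrite Rpower_sub_1 by exact u_pos;
  field_simplify_eq; [|split; [exact speed_ne0 | lra]];
  try replace (speed u v t ^ 4) with ((speed u v t ^ 2) ^ 2) by ring;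
  rewrite speed_sqr; unfold der1; ring.

Lemma is_derive_dL_du' :
  is_derive (dL_du' alpha u v) t
    (dL_du alpha u v t
     - Rpower (u t) alpha * sinh (u t) * der1 v t * curvature_defect alpha u v t).
Proof.
  assert (dp := is_derive_Rpower_l u alpha t _ u_pos (Derive_correct _ _ du)).
  assert (d := is_derive_div _ _ t _ _
                 (is_derive_mult _ _ t _ _ dp (Derive_correct _ _ ddu)
                    (fun _ _ => Rmult_comm _ _))
                 is_derive_speed speed_ne0).
  simpl_derive_value d.
  eapply is_derive_eq_l, d.
  field_using_speed_sqr.
Qed.

Lemma is_derive_dL_dv' :
  is_derive (dL_dv' alpha u v) t
    (Rpower (u t) alpha * sinh (u t) * der1 u t * curvature_defect alpha u v t).
Proof.
  assert (dp := is_derive_Rpower_l u alpha t _ u_pos (Derive_correct _ _ du)).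
  assert (dsinh2 := is_derive_pow (fun y => sinh (u y)) 2 t _
                      (is_derive_sinh_l u t _ (Derive_correct _ _ du))).
  assert (d := is_derive_div _ _ t _ _
                 (is_derive_mult _ _ t _ _
                    (is_derive_mult _ _ t _ _ dp dsinh2 (fun _ _ => Rmult_comm _ _))
                    (Derive_correct _ _ ddv) (fun _ _ => Rmult_comm _ _))
                 is_derive_speed speed_ne0).
  simpl_derive_value d.
  eapply is_derive_eq_l, d.
  field_using_speed_sqr.
Qed.

Lemma euler_lagrange_at_iff :
  (is_derive (dL_du' alpha u v) t (dL_du alpha u v t)
   /\ is_derive (dL_dv' alpha u v) t 0)
  <-> curvature_defect alpha u v t = 0.
Proof.
  assert (factor_pos : 0 < Rpower (u t) alpha * sinh (u t)).
  { apply Rmult_lt_0_compat; [apply exp_pos | apply sinh_pos, u_pos]. }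
  split.
  - intros [d_du' d_dv'].
    apply is_derive_unique in d_du', d_dv'.
    rewrite (is_derive_unique _ _ _ is_derive_dL_du') in d_du'.
    rewrite (is_derive_unique _ _ _ is_derive_dL_dv') in d_dv'.
    apply (eq0_of_mul_coords_eq0 (der1 u t) (sinh (u t) * der1 v t)).
    + rewrite Rpow_mult_distr, <- speed_sqr; apply pow_lt, speed_pos.
    + apply (Rmult_eq_reg_l (Rpower (u t) alpha * sinh (u t))); lra.
    + apply (Rmult_eq_reg_l (Rpower (u t) alpha)); [|apply exp_neq_0]. lra.
  - intros defect_eq0; split.
    + eapply is_derive_eq_l, is_derive_dL_du'; rewrite defect_eq0; ring.
    + eapply is_derive_eq_l, is_derive_dL_dv'; rewrite defect_eq0; ring.
Qed.

End EulerLagrangeResiduals.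

Theorem proposition2p1 (alpha a b : R) (u v : R -> R) :
  alpha <> 0 ->
  a < b ->
  (* u, v are twice differentiable *)
  (forall t, ex_derive u t /\ ex_derive (Derive u) t) ->
  (forall t, ex_derive v t /\ ex_derive (Derive v) t) ->
  (* the curve does not pass through N *)
  (forall t, a <= t <= b -> 0 < u t) ->
  (* the curve is regular *)
  (forall t, a <= t <= b -> 0 < speed u v t) ->
  (alpha_stationary alpha u v a b <->
   forall t, a <= t <= b ->
     curvature u v t = - alpha * (der1 v t * sinh (u t)) / (u t * speed u v t)).
Proof.
  intros _ _ du2 dv2 u_pos speed_pos.
  assert (pointwise : forall t, a <= t <= b ->
    (is_derive (dL_du' alpha u v) t (dL_du alpha u v t)
     /\ is_derive (dL_dv' alpha u v) t 0)
    <-> curvature u v t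
        = - alpha * (der1 v t * sinh (u t)) / (u t * speed u v t)).
  { intros t tab; destruct (du2 t), (dv2 t).
    rewrite euler_lagrange_at_iff by auto.
    split; [apply Rminus_diag_uniq | apply Rminus_diag_eq]. }
  split; intros H t tab; apply (pointwise t tab), H, tab.
Qed.
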